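(* Let $(X,d)$ be a metric space with $|X|=n$ whose distances are integers in $[0,\frac{16k}{\varepsilon}]$, for an integer $k\in[n]$ and $\varepsilon>0$. Then $\mathtt{detRecMSD}(X,k)$ runs in time $\left(O(\frac{k}{\varepsilon})\right)^k\cdot n^{O(1)}$.
   Context: $\operatorname{diam}(S)=\max_{p,q\in S}d(p,q)$, $\operatorname{Ball}(x,R)=\{z\in X:d(x,z)\le R\}$, and the cost of a collection of clusters is the sum of their diameters. The deterministic procedure $\mathtt{detRecMSD}(S,t)$ is: set $\mathcal{C}_i\gets\{S\}$ for all $i\in\{1,\dots,t\}$; if $t=1$ or $|S|=1$ return $(\mathcal{C}_1,\dots,\mathcal{C}_t)$. Otherwise let $x,y\in S$ with $d(x,y)=\operatorname{diam}(S)$; for each integer $R=0,1,\dots,\operatorname{diam}(S)-1$: let $S_1=S\cap\operatorname{Ball}(x,R)$, $S_2=S\setminus\operatorname{Ball}(x,R)$, compute $\mathcal{A}=\mathtt{detRecMSD}(S_1,t-1)$ and $\mathcal{B}=\mathtt{detRecMSD}(S_2,t-1)$, and for all $i,j\in\{1,\dots,t-1\}$ with $i+j\le t$, if $\operatorname{cost}(\mathcal{A}_i\cup\mathcal{B}_j)<\operatorname{cost}(\mathcal{C}_{i+j})$ set $\mathcal{C}_{i+j}\gets\mathcal{A}_i\cup\mathcal{B}_j$. Finally return $(\mathcal{C}_1,\dots,\mathcal{C}_t)$. *)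

From HB Require Import structures.
From mathcomp Require Import all_boot all_order all_algebra.
Set Implicit Arguments. Unset Strict Implicit. Unset Printing Implicit Defensive.
Import Order.TTheory GRing.Theory Num.Theory.

Section MSD.
Variables (T : finType) (d : T -> T -> nat).

Definition is_metric : Prop :=
  [/\ forall x y, d x y = 0 <-> x = y,
      forall x y, d x y = d y x &
      forall x y z, d x z <= d x y + d y z].

Definition diam (S : {set T}) : nat := \max_(p in S) \max_(q in S) d p q.

Definition Ball (x : T) (R : nat) : {set T} := [set z | d x z <= R].

Definition ccost (C : seq {set T}) : nat := \sum_(A <- C) diam A.

(* A family (C_1,...,C_t) of collections of clusters is represented by a
   function nat -> seq {set T} (only indices 1..t are meaningful). *)
Definition family := nat -> seq {set T}.

Definition fupd (C : family) (m : nat) (X : seq {set T}) : family :=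
  fun l => if l == m then X else C l.

Definition combine (t : nat) (A B : family) (C : family) : family :=
  foldl (fun C ij =>
           let i := ij.1 in let j := ij.2 in
           if (i + j <= t) && (ccost (A i ++ B j) < ccost (C (i + j)))
           then fupd C (i + j) (A i ++ B j) else C)
        C [seq (i, j) | i <- iota 1 t.-1, j <- iota 1 t.-1].

(* detRecMSD(S,t), instrumented with an explicit RAM-style step counter.
   Charged costs per call: t (initialising the C_i) + |S|^2 (computing the
   diameter and the pair x,y) + 1; per value of R: |S| (computing S1,S2),
   plus the cost of both recursive calls, plus, for each of the (t-1)^2
   pairs (i,j), 2|S|^2 + 2t + 2 (computing/comparing the two costs and
   updating). *)
Fixpoint detRec (t : nat) (S : {set T}) : family * nat :=
  let init : family := fun _ => [:: S] in
  match t with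
  | 0 => (init, 1)
  | t'.+1 =>
    let base := t + #|S| ^ 2 + 1 in
    if (t' == 0) || (#|S| == 1) then (init, base) else
    match [pick x in S | \max_(q in S) d x q == diam S] with
    | None => (init, base)
    | Some x =>
      foldl (fun (st : family * nat) R =>
               let S1 := S :&: Ball x R in
               let S2 := S :\: Ball x R in
               let rA := detRec t' S1 in
               let rB := detRec t' S2 in
               (combine t rA.1 rB.1 st.1,
                st.2 + #|S| + rA.2 + rB.2
                  + t' * t' * (2 * #|S| ^ 2 + 2 * t + 2)))
            (init, base) (iota 0 (diam S))
    end
  end.

End MSD.

Definition detRec_time (T : finType) (d : T -> T -> nat) (t : nat) (S : {set T}) : nat :=
  (detRec d t S).2.

From HB Require Import structures.
From mathcomp Require Import all_boot all_order all_algebra.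
From mathcomp Require Import zify lra.
Import Order.TTheory GRing.Theory Num.Theory.

(* Each call of detRecMSD(S, t) does polynomial work of its own and, for each
   of the diam(S) <= D radii, makes two calls with depth t - 1.  Hence
   time(t) <= a + D (a + 2 time(t - 1)) with a = O(n^4), so time(k) <= a (1 + 3D)^k,
   and D <= 16k/eps gives the bound (O(1 + k/eps))^k n^O(1). *)

Lemma foldl_snd_le (A : Type) (f : A * nat -> nat -> A * nat) c l st :
  (forall st R, ((f st R).2 <= st.2 + c)%N) ->
  ((foldl f st l).2 <= st.2 + size l * c)%N.
Proof.
move=> f_le; elim: l st => [|R l IH] st /=; first by rewrite addn0.
apply: leq_trans (IH _) _; rewrite mulSn addnA leq_add2r; exact: f_le.
Qed.

Section DetRecTime.

Variables (T : finType) (d : T -> T -> nat).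

Lemma diamS (S S' : {set T}) : S \subset S' -> (diam d S <= diam d S')%N.
Proof.
move=> sSS'; apply/bigmax_leqP => p pS; apply/bigmax_leqP => q qS.
apply: leq_trans (leq_bigmax_cond _ (subsetP sSS' p pS)).
exact: leq_bigmax_cond (subsetP sSS' q qS).
Qed.

Lemma ler_diam (R : numDomainType) (S : {set T}) (b : R) :
  (0 <= b)%R -> (forall p q, (d p q)%:R <= b)%R -> ((diam d S)%:R <= b)%R.
Proof.
move=> b_ge0 d_le.
have max_le m1 m2 : (m1%:R <= b -> m2%:R <= b -> (maxn m1 m2)%:R <= b)%R.
  by rewrite /maxn; case: ifP.
by rewrite /diam; elim/big_ind: _ => // p _; elim/big_ind: _.
Qed.

Lemma detRec_time_succ t S b :
  (forall S', ((detRec d t S').2 <= b)%N) ->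
  ((detRec d t.+1 S).2 <= t.+1 + #|S| ^ 2 + 1
     + diam d S * (#|S| + 2 * b + t * t * (2 * #|S| ^ 2 + 2 * t.+1 + 2)))%N.
Proof.
move=> rec_le /=; case: ifP => _; first exact: leq_addr.
case: pickP => [x _|_]; last exact: leq_addr.
set c := (#|S| + 2 * b + _)%N.
apply: leq_trans (@foldl_snd_le _ _ c _ _ _) _ => [st R /=|]; last by rewrite size_iota.
have := rec_le (S :&: Ball d x R); have := rec_le (S :\: Ball d x R); lia.
Qed.

Lemma detRec_time_le t S :
  (0 < #|T|)%N -> (t <= #|T|)%N ->
  ((detRec d t S).2 <= 7 * #|T| ^ 4 * (1 + 3 * diam d [set: T]) ^ t)%N.
Proof.
set n := #|T|; set D := diam d [set: T]; move=> n_gt0.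
elim: t S => [|t IH] S t_le /=; first by rewrite expn0 muln1; nia.
apply: leq_trans (@detRec_time_succ t S _ (fun S' => IH S' (ltnW t_le))) _.
have S_le : (#|S| <= n)%N by apply: max_card.
have diam_le : (diam d S <= D)%N by apply: diamS; apply: subsetT.
have Q_gt0 : (0 < (1 + 3 * D) ^ t)%N by rewrite expn_gt0.
have S2_le : (#|S| ^ 2 <= n ^ 2)%N by rewrite leq_exp2r.
have n2_le : (n ^ 2 <= n ^ 4)%N by rewrite leq_pexp2l.
have n_le : (n <= n ^ 4)%N by rewrite -{1}(expn1 n) leq_pexp2l.
have base_le : (t.+1 + #|S| ^ 2 + 1 <= 7 * n ^ 4)%N by nia.
have tt_le : (t * t <= n ^ 2)%N by rewrite -mulnn; nia.
have combine_le : (t * t * (2 * #|S| ^ 2 + 2 * t.+1 + 2) <= 6 * n ^ 4)%N.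
  rewrite (_ : 6 * n ^ 4 = n ^ 2 * (6 * n ^ 2))%N; last by rewrite mulnCA -expnD.
  by apply: leq_mul => //; nia.
set Q := (1 + 3 * D) ^ t in Q_gt0 *; set a := (7 * n ^ 4)%N in base_le combine_le *.
have aQ_ge : (a <= a * Q)%N by rewrite leq_pmulr.
have call_le : (#|S| + 2 * (a * Q) + t * t * (2 * #|S| ^ 2 + 2 * t.+1 + 2) <= 3 * (a * Q))%N.
  rewrite /a in aQ_ge *; lia.
rewrite (expnSr (1 + 3 * D)) -/Q.
apply: leq_trans (leq_add base_le (leq_mul diam_le call_le)) _.
lia.
Qed.

End DetRecTime.

Local Open Scope ring_scope.

Lemma ler_branching_factor (R : realFieldType) (k D : nat) (eps : R) :
  0 < eps -> D%:R <= 16 * k%:R / eps ->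
  (7 * (1 + 3 * D))%:R <= 336%:R * (1 + k%:R / eps).
Proof.
move=> eps_gt0; rewrite -mulrA natrM natrD natrM.
have : 0 <= k%:R / eps by rewrite divr_ge0 ?ler0n // ltW.
move: (k%:R / eps) => y; lra.
Qed.

Theorem lemma6 :
  exists C : nat,
  forall (R : realFieldType) (T : finType) (d : T -> T -> nat),
    is_metric d ->
    forall (k : nat) (eps : R),
      (1 <= k <= #|T|)%N ->
      0 < eps ->
      (forall x y : T, (d x y)%:R <= 16 * k%:R / eps) ->
      (detRec_time d k [set: T])%:R
        <= (C%:R * (1 + k%:R / eps)) ^+ k * (#|T|%:R) ^+ C.
Proof.
exists 336%N => R T d _ k eps /andP[k_gt0 k_le] eps_gt0 d_le.
set n := #|T|; set D := diam d [set: T].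
have n_gt0 : (0 < n)%N by apply: leq_trans k_le.
have D_le : D%:R <= 16 * k%:R / eps.
  by apply: ler_diam => //; rewrite divr_ge0 ?mulr_ge0 // ltW.
have time_le : (detRec_time d k [set: T] <= (7 * (1 + 3 * D)) ^ k * n ^ 336)%N.
  apply: leq_trans (@detRec_time_le T d k [set: T] n_gt0 k_le) _.
  rewrite expnMn mulnAC leq_mul ?leq_pexp2l // leq_mul //.
  by rewrite -{1}(expn1 7) leq_exp2l.
apply: le_trans (_ : ((7 * (1 + 3 * D)) ^ k * n ^ 336)%:R <= _); first by rewrite ler_nat.
rewrite natrM !natrX ler_wpM2r ?exprn_ge0 ?ler0n //.
apply: lerXn2r; rewrite ?nnegrE ?ler0n ?ler_branching_factor //.
by rewrite mulr_ge0 ?ler0n // addr_ge0 ?divr_ge0 ?ler0n // ltW.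
Qed.
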